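(* Let $S$ be a standard graded polynomial ring over a field, and let $I$ and $J$ be homogeneous square-free monomial ideals of $S$ generated in degrees $n_1$ and $n_2$ respectively, with $J\subseteq I$ and $n_2>n_1$. Let $\{m_1,\dots,m_k\}$ be the set of minimal monomial generators of $I$. Put $A=\operatorname{reg}(J:m_1)+n_1$, $B=\max\{\operatorname{reg}((J,m_1,\dots,m_l):m_{l+1})+n_1 : 1\leq l\leq k-1\}$ and $C=\operatorname{reg}(I)$. Then $\operatorname{reg}(J)\leq\max\{A,B,C\}$.
   Context: For a finitely generated graded $S$-module $M$, $\operatorname{reg}(M)=\max\{j-i : \operatorname{Tor}_i^S(M,K)_j\neq 0\}$. ''Generated in degree $d$'' means all minimal generators have degree $d$. For an ideal $J$ and monomial $m$, $(J:m)=\{f\in S: fm\in J\}$. *)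

From HB Require Import structures.
From mathcomp Require Import all_boot all_order all_algebra.
Set Implicit Arguments. Unset Strict Implicit. Unset Printing Implicit Defensive.
Import GRing.Theory.
Local Open Scope ring_scope.

(* Monomials of S = K[x_0,...,x_(n-1)] are encoded by exponent vectors. *)
Definition mono (n : nat) := {ffun 'I_n -> nat}.

(* A monomial ideal is encoded by its membership predicate on monomials
   (a monomial ideal is spanned over K by the monomials it contains). *)
Definition monideal (n : nat) := mono n -> bool.

Definition mdvd n (m b : mono n) : bool := [forall l, (m l <= b l)%N].

Definition gen n (gs : seq (mono n)) : monideal n :=
  fun b => has (fun g => mdvd g b) gs.

Definition addgen n (J : monideal n) (gs : seq (mono n)) : monideal n :=
  fun b => J b || gen gs b.

Definition colon n (J : monideal n) (m : mono n) : monideal n :=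
  fun b => J [ffun l => (b l + m l)%N].

Definition squarefree n (m : mono n) : bool := [forall l, (m l <= 1)%N].
Definition mdeg n (m : mono n) : nat := (\sum_(l < n) m l)%N.

(* ---------- Tor_i^S(J, K)_j via the Koszul resolution of K ----------
   Tor_i^S(J,K) = H_i(J (x) K(x_0..x_(n-1))).  The degree-j part of
   J (x) K_i has K-basis  x^b (x) e_F  with |F| = i, x^b in J,
   deg b + |F| = j.  Basis candidates are indexed by pairs (F, b) with
   entries of b bounded by j (automatically true for valid ones). *)
Definition KIdx (n j : nat) := ({set 'I_n} * {ffun 'I_n -> 'I_j.+1})%type.

Definition kexp n j (x : KIdx n j) : mono n := [ffun l => nat_of_ord (x.2 l)].

Definition kvalid n (J : monideal n) (i j : nat) (x : KIdx n j) : bool :=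
  [&& #|x.1| == i, (mdeg (kexp x) + #|x.1|)%N == j & J (kexp x)].

Definition ksign (K : fieldType) n (k : 'I_n) (F : {set 'I_n}) : K :=
  (-1) ^+ #|[set l in F | (l < k)%N]|.

(* coefficient of basis vector y in d(x), d(x^b e_F) =
   sum_{k in F} sign(k,F) x^(b+e_k) e_(F\k) *)
Definition kentry (K : fieldType) n j (x y : KIdx n j) : K :=
  \sum_(k in x.1)
    (if (y.1 == x.1 :\ k) && [forall l, (nat_of_ord (y.2 l) == x.2 l + (l == k))%N]
     then ksign K k x.1 else 0).

Definition kN n j := #|{: KIdx n j}|.

Definition kdiff (K : fieldType) n j : 'M[K]_(kN n j) :=
  \matrix_(u, v) kentry K (enum_val u) (enum_val v).

Definition kproj (K : fieldType) n (J : monideal n) (i j : nat) : 'M[K]_(kN n j) :=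
  \matrix_(u, v) (if (u == v) && kvalid J i (enum_val u) then 1 else 0).

(* Tor_i^S(J, K)_j <> 0 : cycles in degree i not all boundaries *)
Definition Tor_nz (K : fieldType) n (J : monideal n) (i j : nat) : bool :=
  ~~ ((kproj K J i j :&: kermx (kdiff K n j)) <= kproj K J i.+1 j *m kdiff K n j)%MS.

Definition reg_le (K : fieldType) n (J : monideal n) (r : int) : Prop :=
  forall i j : nat, Tor_nz K J i j -> (j%:Z - i%:Z <= r)%R.

From HB Require Import structures.
From mathcomp Require Import all_boot all_order all_algebra.
From mathcomp Require Import zify ring.
Set Implicit Arguments. Unset Strict Implicit. Unset Printing Implicit Defensive.
Import GRing.Theory.
Local Open Scope ring_scope.

(* For a monomial [m], the exact sequence 0 -> J -> (J, m) -> (S / (J : m))(-deg m) -> 0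
   gives: if Tor_i(J)_j <> 0 then Tor_i((J, m))_j <> 0 or Tor_i(J : m)_(j - deg m) <> 0,
   so reg J <= max (reg (J, m), reg (J : m) + deg m).  Since J is contained in I,
   (J, m_1, ..., m_k) = I, and removing m_k, ..., m_1 one at a time bounds reg J by
   max (A, B, C).  The homological step is done on Koszul chains: a cycle of J (x) K
   that bounds in (J, m) (x) K bounds a chain whose part outside J is divisible by
   x^m; dividing that part by x^m yields a cycle of (J : m) (x) K. *)

Section Monomials.
Variable n : nat.
Implicit Types (a b c m : mono n) (k l : 'I_n).

Definition munit k : mono n := [ffun l => nat_of_bool (l == k)].
Definition mmul a b : mono n := [ffun l => (a l + b l)%N].
(* Exponentwise truncated subtraction: the quotient [b / m] when [mdvd m b]. *)
Definition mquo b m : mono n := [ffun l => (b l - m l)%N].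

Lemma mdeg_mmul a b : mdeg (mmul a b) = (mdeg a + mdeg b)%N.
Proof. by rewrite /mdeg -big_split; apply: eq_bigr => l _; rewrite ffunE. Qed.

Lemma mdeg_munit k : mdeg (munit k) = 1%N.
Proof.
rewrite /mdeg (bigD1 k) //= ffunE eqxx big1 // => l lk.
by rewrite ffunE (negbTE lk).
Qed.

Lemma leq_mdeg c l : (c l <= mdeg c)%N.
Proof. by rewrite /mdeg (bigD1 l) //= leq_addr. Qed.

Lemma mdvd_munit k c : mdvd (munit k) c = (0 < c k)%N.
Proof.
apply/forallP/idP => [/(_ k)|ck l]; first by rewrite ffunE eqxx.
by rewrite ffunE; case: eqP => [->|].
Qed.

Lemma mdvd_mmulr m b a : mdvd m b -> mdvd m (mmul b a).
Proof.
by move=> /forallP mb; apply/forallP => l; rewrite ffunE (leq_trans (mb l) (leq_addr _ _)).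
Qed.

Lemma mdvd_mmull m c : mdvd m (mmul c m).
Proof. by apply/forallP => l; rewrite ffunE leq_addl. Qed.

Lemma mquoK m b : mdvd m b -> mmul (mquo b m) m = b.
Proof. by move=> /forallP mb; apply/ffunP => l; rewrite !ffunE subnK. Qed.

Lemma mmulK m c : mquo (mmul c m) m = c.
Proof. by apply/ffunP => l; rewrite !ffunE addnK. Qed.

Lemma mdeg_mquo m b : mdvd m b -> (mdeg (mquo b m) + mdeg m)%N = mdeg b.
Proof. by move=> /mquoK {2}<-; rewrite mdeg_mmul. Qed.

Lemma mdvd_leq_mdeg m b : mdvd m b -> (mdeg m <= mdeg b)%N.
Proof. by move=> /mdeg_mquo <-; rewrite leq_addl. Qed.

Lemma mquoAC b m a : mquo (mquo b m) a = mquo (mquo b a) m.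
Proof. by apply/ffunP => l; rewrite !ffunE subnAC. Qed.

Lemma mdvd_mquo m b a : mdvd m (mquo b a) -> mdvd m b.
Proof.
by move=> /forallP mba; apply/forallP => l; rewrite (leq_trans (mba l)) // ffunE leq_subr.
Qed.

Lemma mdvd_munit_mquo m b k : mdvd m b ->
  (0 < b k)%N && mdvd m (mquo b (munit k)) = (0 < mquo b m k)%N.
Proof.
move=> /forallP mb; rewrite ffunE; apply/idP/idP.
  by case/andP => bk /forallP /(_ k); rewrite !ffunE eqxx /=; lia.
move=> h; apply/andP; split; first lia.
apply/forallP => l; rewrite !ffunE; case: (eqVneq l k) => [->|lk] /=; first lia.
by rewrite subn0 mb.
Qed.

End Monomials.

Lemma ksign_setU1_self (K : fieldType) n (k : 'I_n) (G : {set 'I_n}) :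
  ksign K k (k |: G) = ksign K k G.
Proof.
rewrite /ksign; congr (_ ^+ _); apply: eq_card => x; rewrite !inE.
by case: (eqVneq x k) => [->|]; rewrite ?ltnn ?andbF.
Qed.

Lemma ksign_setU1 (K : fieldType) n (k l : 'I_n) (G : {set 'I_n}) : k \notin G ->
  ksign K l (k |: G) = ksign K l G * (-1) ^+ (k < l)%N.
Proof.
move=> kG; rewrite /ksign -exprD; congr (_ ^+ _).
case: (ltnP k l) => kl.
- have -> : [set x in k |: G | (x < l)%N] = k |: [set x in G | (x < l)%N].
    by apply/setP => x; rewrite !inE; case: (eqVneq x k) => [->|]; rewrite ?kl.
  by rewrite cardsU1 inE (negbTE kG) /= addnC.
- have -> : [set x in k |: G | (x < l)%N] = [set x in G | (x < l)%N].
    apply/setP => x; rewrite !inE; case: (eqVneq x k) => [->|] //=.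
    by rewrite ltnNge kl andbF.
  by rewrite addn0.
Qed.

Lemma sum_antisym (K : zmodType) n (A : 'I_n -> 'I_n -> K) :
  (forall k, A k k = 0) -> (forall k l, A k l = - A l k) ->
  \sum_k \sum_l A k l = 0.
Proof.
move=> A0 Aa.
have Asplit k l : A k l = (if (k < l)%N then A k l else 0)
                          + (if (l < k)%N then A k l else 0).
  by case: (ltngtP k l) => [_|_|/val_inj->]; rewrite ?addr0 ?add0r ?A0.
under eq_bigr do under eq_bigr do rewrite Asplit.
under eq_bigr do rewrite big_split.
rewrite big_split /= [X in _ + X]exchange_big -big_split /= big1 // => k _.
rewrite -big_split big1 //= => l _.
by case: ifP => _; rewrite ?addr0 // [A l k]Aa addrN.
Qed.

Lemma sum_neq0_exists (V : nmodType) (I : finType) (P : pred I) (F : I -> V) :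
  \sum_(i | P i) F i != 0 -> exists2 i, P i & F i != 0.
Proof.
move=> H; case: (boolP [exists i, P i && (F i != 0)]) => [/existsP [i /andP []]|].
  by exists i.
move=> /existsPn Hn; move: H; rewrite big1 ?eqxx // => i Pi.
by move: (Hn i); rewrite Pi negbK => /eqP.
Qed.

Section Chains.
Variables (K : fieldType) (n : nat).

(* A chain of the Koszul complex of a monomial ideal: [f G c] is the
   coefficient of the basis vector [x^c (x) e_G]. *)
Definition chain := {set 'I_n} -> mono n -> K.

Implicit Types (f g : chain) (J : monideal n) (G : {set 'I_n}) (b c m : mono n).

(* The coefficient of [x^c e_G] in [d f], for the differential
   [d (x^b e_F) = \sum_(k in F) ksign k F x^(b + e_k) e_(F :\ k)] encoded by [kentry]. *)
Definition koszul_d f : chain := fun G c =>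
  \sum_(k | (k \notin G) && (0 < c k)%N) ksign K k G * f (k |: G) (mquo c (munit k)).

Lemma eq_koszul_d f g : (forall G c, f G c = g G c) ->
  forall G c, koszul_d f G c = koszul_d g G c.
Proof. by move=> fg G c; apply: eq_bigr => k _; rewrite fg. Qed.

Lemma koszul_dD f g G c :
  koszul_d (fun G c => f G c + g G c) G c = koszul_d f G c + koszul_d g G c.
Proof. by rewrite /koszul_d -big_split; apply: eq_bigr => k _; rewrite mulrDr. Qed.

Lemma koszul_dB f g G c :
  koszul_d (fun G c => f G c - g G c) G c = koszul_d f G c - koszul_d g G c.
Proof. by rewrite /koszul_d -sumrB; apply: eq_bigr => k _; rewrite mulrBr. Qed.

Lemma koszul_d_neq0 f G c : koszul_d f G c != 0 ->
  exists k, [/\ k \notin G, (0 < c k)%N & f (k |: G) (mquo c (munit k)) != 0].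
Proof.
move=> /sum_neq0_exists [k /andP [kG ck] H]; exists k; split=> //.
by apply: contraNneq H => ->; rewrite mulr0.
Qed.

Lemma koszul_dd f G c : koszul_d (koszul_d f) G c = 0.
Proof.
pose cond k l := [&& k != l, k \notin G, l \notin G, (0 < c k)%N & (0 < c l)%N].
pose A k l := if cond k l then ksign K k G * (ksign K l (k |: G) *
    f (l |: (k |: G)) (mquo (mquo c (munit k)) (munit l))) else 0.
transitivity (\sum_k \sum_l A k l).
  rewrite /koszul_d big_mkcond /=; apply: eq_bigr => k _.
  case: ifP => [/andP [kG ck]|Pk]; last first.
    rewrite big1 // => l _; rewrite /A /cond.
    by case: and5P => // -[_ kG _ ck _]; rewrite kG ck in Pk.
  rewrite mulr_sumr big_mkcond /=; apply: eq_bigr => l _.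
  rewrite /A /cond kG ck !inE !ffunE /= negb_or.
  by case: (eqVneq l k) => [->|lk] //=; rewrite subn0.
(* Removing [e_k] then [e_l] and removing [e_l] then [e_k] give opposite signs. *)
apply: sum_antisym => [k|k l]; first by rewrite /A /cond eqxx.
rewrite /A /cond.
case: (eqVneq k l) => [->|kl]; first by rewrite oppr0.
rewrite /=; case kG: (k \in G); case lG: (l \in G);
  case: (0 < c k)%N; case: (0 < c l)%N; rewrite /= ?oppr0 //.
rewrite setUCA mquoAC.
rewrite !mulrA -mulNr; congr (_ * _); rewrite !ksign_setU1 ?kG ?lG //.
by case: (ltngtP k l) => [_|_|/val_inj/eqP]; rewrite ?(negbTE kl) //= ?expr0 ?expr1; ring.
Qed.

End Chains.

Section KoszulHomology.
Variables (K : fieldType) (n : nat).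
Implicit Types (f g : chain K n) (J : monideal n) (G : {set 'I_n}) (b c m : mono n).

Definition supported f (P : {set 'I_n} -> mono n -> bool) :=
  forall G c, f G c != 0 -> P G c.

(* Basis of the degree-[j] part of [J (x) K_i]; definitionally [kvalid J i (G, c)]. *)
Definition kbasis J (i j : nat) G c : bool :=
  [&& #|G| == i, mdeg c + #|G| == j & J c].

Definition Tor_vanish J (i j : nat) : Prop :=
  forall f, supported f (kbasis J i j) -> (forall G c, koszul_d f G c = 0) ->
  exists g, supported g (kbasis J i.+1 j) /\ forall G c, koszul_d g G c = f G c.

Definition is_ideal J := forall b k, J b -> J (mmul b (munit k)).

Lemma supported_impl f (P Q : {set 'I_n} -> mono n -> bool) :
  (forall G c, P G c -> Q G c) -> supported f P -> supported f Q.
Proof. by move=> PQ sf G c /sf; apply: PQ. Qed.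

Lemma supportedD f g P :
  supported f P -> supported g P -> supported (fun G c => f G c + g G c) P.
Proof.
move=> sf sg G c; case: (eqVneq (f G c) 0) => [->|/sf//]; rewrite add0r; exact: sg.
Qed.

Lemma supportedB f g P :
  supported f P -> supported g P -> supported (fun G c => f G c - g G c) P.
Proof.
move=> sf sg G c; case: (eqVneq (f G c) 0) => [->|/sf//].
by rewrite sub0r oppr_eq0; exact: sg.
Qed.

Lemma supported_koszul_d J f i j : is_ideal J ->
  supported f (kbasis J i.+1 j) -> supported (koszul_d f) (kbasis J i j).
Proof.
move=> idJ sf G c /koszul_d_neq0 [k [kG ck /sf /and3P [/eqP h1 /eqP h2 h3]]].
have ek : mdvd (munit k) c by rewrite mdvd_munit.
move: h1 h2 (mdeg_mquo ek); rewrite cardsU1 kG mdeg_munit => h1 h2 h4.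
apply/and3P; split; [apply/eqP; lia | apply/eqP; lia |].
by rewrite -(mquoK ek); apply: idJ.
Qed.

Definition chain_mul m f : chain K n :=
  fun G b => if mdvd m b then f G (mquo b m) else 0.
Definition chain_div m f : chain K n := fun G c => f G (mmul c m).

Lemma chain_mul_mmul m f G c : chain_mul m f G (mmul c m) = f G c.
Proof. by rewrite /chain_mul mdvd_mmull mmulK. Qed.

Lemma chain_mul_divK m f G b :
  supported f (fun _ b => mdvd m b) -> chain_mul m (chain_div m f) G b = f G b.
Proof.
move=> sf; rewrite /chain_mul /chain_div; case: ifP => [/mquoK -> //|mb].
by case: (eqVneq (f G b) 0) => // /sf; rewrite mb.
Qed.

Lemma koszul_d_mul m f G b :
  koszul_d (chain_mul m f) G b = chain_mul m (koszul_d f) G b.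
Proof.
rewrite /chain_mul /koszul_d; case: ifP => mb; last first.
  rewrite big1 // => k _; case: ifP => [/mdvd_mquo|_]; last by rewrite mulr0.
  by rewrite mb.
rewrite big_mkcond [RHS]big_mkcond; apply: eq_bigr => k _ /=.
rewrite -(mdvd_munit_mquo k mb) (mquoAC b m).
by case: (k \notin G); case: (0 < b k)%N; case: mdvd; rewrite /= ?mulr0.
Qed.

(* Divide [w] by [x^m], bound the resulting cycle of [(J : m) (x) K] by [u],
   and multiply [u] back by [x^m]. *)
Lemma boundary_of_multiples J m i j w :
  supported w (fun G c => kbasis predT i.+1 j G c && mdvd m c) ->
  supported (koszul_d w) (kbasis J i j) ->
  (forall j', j = (j' + mdeg m)%N -> Tor_vanish (colon J m) i j') ->
  exists u, supported u (kbasis J i.+1 j) /\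
            forall G c, koszul_d u G c = koszul_d w G c.
Proof.
move=> sw sDw Tcolon; case: (leqP (mdeg m) j) => hj; last first.
  exists w; split=> // G c /sw /andP [/and3P [_ /eqP hc _] /mdvd_leq_mdeg]; lia.
have sw_m : supported w (fun _ c => mdvd m c) by apply: supported_impl sw => G c /andP [].
pose q := koszul_d (chain_div m w).
have Dw G b : koszul_d w G b = chain_mul m q G b.
  rewrite -koszul_d_mul; apply: eq_koszul_d => H c; exact/esym/chain_mul_divK.
have sq : supported q (kbasis (colon J m) i (j - mdeg m)).
  move=> G c; rewrite -(chain_mul_mmul m q) -Dw => /sDw /and3P [h1 /eqP hd Jc].
  by rewrite /kbasis h1 /colon Jc andbT; rewrite mdeg_mmul in hd; apply/eqP; lia.
have [u [su Du]] := Tcolon _ (esym (subnK hj)) q sq (koszul_dd _).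
exists (chain_mul m u); split=> [G b|G c]; last by rewrite koszul_d_mul Dw /chain_mul Du.
rewrite /chain_mul; case: ifP => [mb /su /and3P [h1 /eqP h2 h3]|]; last by rewrite eqxx.
move: h3; rewrite /colon -/(mmul (mquo b m) m) mquoK // => Jb.
by rewrite /kbasis h1 Jb -(mdeg_mquo mb); apply/eqP; lia.
Qed.

Lemma Tor_vanish_add_colon J m i j : is_ideal J ->
  Tor_vanish (fun b => J b || mdvd m b) i j ->
  (forall j', j = (j' + mdeg m)%N -> Tor_vanish (colon J m) i j') ->
  Tor_vanish J i j.
Proof.
move=> idJ Tadd Tcolon z sz Dz.
have [w [sw Dw]] : exists w, supported w (kbasis (fun b => J b || mdvd m b) i.+1 j)
                           /\ forall G c, koszul_d w G c = z G c.
  by apply: Tadd Dz; apply: supported_impl sz => G c /and3P [h1 h2 Jc];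
    rewrite /kbasis h1 h2 Jc.
pose w1 G c := if J c then w G c else 0.
pose w2 G c := if J c then 0 else w G c.
have sw1 : supported w1 (kbasis J i.+1 j).
  move=> G c; rewrite /w1; case: ifP => [Jc /sw /and3P [h1 h2 _]|]; last by rewrite eqxx.
  by rewrite /kbasis h1 h2 Jc.
have Dw2 G c : koszul_d w2 G c = z G c - koszul_d w1 G c.
  rewrite -Dw -koszul_dB; apply: eq_koszul_d => H b.
  by rewrite /w1 /w2; case: ifP; rewrite ?subr0 ?subrr.
have sw2 : supported w2 (fun G c => kbasis predT i.+1 j G c && mdvd m c).
  move=> G c; rewrite /w2; case: ifP => Jc; first by rewrite eqxx.
  by move=> /sw /and3P [h1 h2]; rewrite /kbasis h1 h2 Jc.
have sDw2 : supported (koszul_d w2) (kbasis J i j).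
  by move=> G c; rewrite Dw2; apply: supportedB G c => //; exact: supported_koszul_d.
have [u [su Du]] := boundary_of_multiples sw2 sDw2 Tcolon.
exists (fun G c => w1 G c + u G c); split; first exact: supportedD.
by move=> G c; rewrite koszul_dD Du Dw2 addrC subrK.
Qed.

End KoszulHomology.

Section KoszulMatrix.
Variables (K : fieldType) (n j : nat).
Implicit Types (f g : chain K n) (J : monideal n) (G : {set 'I_n}) (c : mono n)
               (v w : 'rV[K]_(kN n j)).

Definition homog G c := (mdeg c + #|G| == j)%N.

(* The exponents of a basis vector of total degree [j] are at most [j], so
   [inord] loses nothing on homogeneous pairs. *)
Definition kidx G c : KIdx n j := (G, [ffun l => inord (c l)]).

Definition chain_of_row v : chain K n :=
  fun G c => if homog G c then v 0 (enum_rank (kidx G c)) else 0.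

Definition row_of_chain f : 'rV[K]_(kN n j) :=
  \row_u f (enum_val u).1 (kexp (enum_val u)).

Definition row_homog v := forall u, v 0 u != 0 -> homog (enum_val u).1 (kexp (enum_val u)).

Lemma kidx_val G c l : homog G c -> nat_of_ord ((kidx G c).2 l) = c l.
Proof. by move=> /eqP h; rewrite ffunE inordK //; have := leq_mdeg c l; lia. Qed.

Lemma kexp_kidx G c : homog G c -> kexp (kidx G c) = c.
Proof. by move=> h; apply/ffunP => l; rewrite ffunE kidx_val. Qed.

Lemma kidx_kexp (x : KIdx n j) : kidx x.1 (kexp x) = x.
Proof.
by case: x => F b; congr pair; apply/ffunP => l; rewrite !ffunE inord_val.
Qed.

Lemma chain_of_row_val v u : homog (enum_val u).1 (kexp (enum_val u)) ->
  chain_of_row v (enum_val u).1 (kexp (enum_val u)) = v 0 u.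
Proof. by move=> h; rewrite /chain_of_row h kidx_kexp enum_valK. Qed.

Lemma chain_of_row_inj v w : row_homog v -> row_homog w ->
  (forall G c, chain_of_row v G c = chain_of_row w G c) -> v = w.
Proof.
move=> hv hw E; apply/rowP => u.
case: (boolP (homog (enum_val u).1 (kexp (enum_val u)))) => h.
  by rewrite -!chain_of_row_val.
case: (eqVneq (v 0 u) 0) => [->|/hv]; last by rewrite (negbTE h).
by case: (eqVneq (w 0 u) 0) => [->|/hw] //; rewrite (negbTE h).
Qed.

Lemma row_of_chainK f G c : supported f homog -> chain_of_row (row_of_chain f) G c = f G c.
Proof.
move=> sf; rewrite /chain_of_row /row_of_chain; case: ifP => h.
  by rewrite mxE enum_rankK /= kexp_kidx.
by case: (eqVneq (f G c) 0) => // /sf; rewrite h.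
Qed.

Lemma chain_of_row0 G c : chain_of_row 0 G c = 0.
Proof. by rewrite /chain_of_row mxE; case: ifP. Qed.

Lemma kentry_neq0 (x y : KIdx n j) : kentry K x y != 0 ->
  exists2 k, k \in x.1 & y.1 = x.1 :\ k /\ kexp y = mmul (kexp x) (munit k).
Proof.
move=> /sum_neq0_exists [k kx]; case: ifP => [/andP [/eqP h1 /forallP h2] _|]; last first.
  by rewrite eqxx.
by exists k => //; split => //; apply/ffunP => l; rewrite !ffunE; apply/eqP.
Qed.

Lemma row_homog_mul v : row_homog v -> row_homog (v *m kdiff K n j).
Proof.
move=> hv w; rewrite mxE => /sum_neq0_exists [u _]; rewrite mxE.
case: (eqVneq (v 0 u) 0) => [->|/hv hu]; first by rewrite mul0r eqxx.
move=> H; have : kentry K (enum_val u) (enum_val w) != 0.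
  by apply: contraNneq H => ->; rewrite mulr0.
move=> /kentry_neq0 [k kx [h1 h2]]; move: hu; rewrite /homog h1 h2 mdeg_mmul mdeg_munit.
rewrite (cardsD1 k) kx add1n => /eqP he; apply/eqP.
by rewrite addn1 addSnnS.
Qed.

Lemma homog_setU1 G c k : k \notin G -> (0 < c k)%N ->
  homog (k |: G) (mquo c (munit k)) = homog G c.
Proof.
move=> kG ck; have ek : mdvd (munit k) c by rewrite mdvd_munit.
by rewrite /homog cardsU1 kG -[mdeg c](mdeg_mquo ek) mdeg_munit addnA.
Qed.

Lemma kentry_cond G c (x : KIdx n j) k : homog G c ->
  (k \in x.1) && ((G == x.1 :\ k) &&
     [forall l, nat_of_ord ((kidx G c).2 l) == (x.2 l + (l == k))%N])
  = [&& k \notin G, (0 < c k)%N & x == kidx (k |: G) (mquo c (munit k))].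
Proof.
move=> hc; apply/idP/idP.
  case/and3P => kx /eqP hG /forallP hx.
  have kG : k \notin G by rewrite hG !inE eqxx.
  have ck : (0 < c k)%N by have := hx k; rewrite kidx_val // eqxx; lia.
  rewrite kG ck; apply/eqP; rewrite -[x]kidx_kexp hG setD1K //; congr kidx.
  by apply/ffunP => l; have := hx l; rewrite kidx_val // !ffunE; case: (eqVneq l k) => /=; lia.
case/and3P => kG ck /eqP ->; have hk : homog (k |: G) (mquo c (munit k)).
  by rewrite homog_setU1.
rewrite setU11 setU1K // eqxx; apply/forallP => l.
by rewrite !kidx_val // !ffunE; case: (eqVneq l k) => [->|] /=; lia.
Qed.

Lemma chain_of_row_mul v G c :
  chain_of_row (v *m kdiff K n j) G c = koszul_d (chain_of_row v) G c.
Proof.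
rewrite /chain_of_row; case: ifP => hc; last first.
  rewrite /koszul_d big1 // => k /andP [kG ck].
  by rewrite homog_setU1 // hc mulr0.
rewrite mxE; transitivity (\sum_(x : KIdx n j) v 0 (enum_rank x) * kentry K x (kidx G c)).
  rewrite (reindex enum_rank) /=; last first.
    by exists enum_val => x _; rewrite ?enum_rankK ?enum_valK.
  by apply: eq_bigr => x _; rewrite mxE !enum_rankK.
under eq_bigr do rewrite /kentry mulr_sumr big_mkcond /=.
rewrite exchange_big /koszul_d [RHS]big_mkcond /=; apply: eq_bigr => k _.
case: (boolP ((k \notin G) && (0 < c k)%N)) => [/andP [kG ck]|H]; last first.
  rewrite big1 // => x _; case: ifP => // kx; case: ifP => hx; last by rewrite mulr0.
  by have := kentry_cond x k hc; rewrite kx hx /=; move: H; case: (k \in G); case: (0 < c k)%N.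
rewrite (bigD1 (kidx (k |: G) (mquo c (munit k)))) //= big1 => [|x xX]; last first.
  case: ifP => // kx; case: ifP => hx; last by rewrite mulr0.
  by have := kentry_cond x k hc; rewrite kx hx /= kG ck (negbTE xX).
have := kentry_cond (kidx (k |: G) (mquo c (munit k))) k hc.
rewrite kG ck eqxx => /andP [-> ->].
by rewrite homog_setU1 // hc addr0 ksign_setU1_self mulrC.
Qed.

Lemma kproj_entry J i v u :
  (v *m kproj K J i j) 0 u = if kvalid J i (enum_val u) then v 0 u else 0.
Proof.
rewrite mxE (bigD1 u) //= mxE eqxx /= big1 => [|w wu]; last by rewrite mxE (negbTE wu) mulr0.
by case: ifP; rewrite ?mulr1 ?mulr0 addr0.
Qed.

Lemma row_of_chain_proj J i f :
  supported f (kbasis J i j) -> row_of_chain f *m kproj K J i j = row_of_chain f.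
Proof.
move=> sf; apply/rowP => u; rewrite kproj_entry; case: ifP => // hv.
rewrite mxE; case: (eqVneq (f (enum_val u).1 (kexp (enum_val u))) 0) => // /sf h.
by have h' : kvalid J i (enum_val u) := h; rewrite h' in hv.
Qed.

Lemma supported_homog J i f : supported f (kbasis J i j) -> supported f homog.
Proof. by apply: supported_impl => G c /and3P []. Qed.

Lemma row_homog_of_chain J i f : supported f (kbasis J i j) -> row_homog (row_of_chain f).
Proof. by move=> sf u; rewrite mxE => /sf /and3P []. Qed.

Lemma supported_chain_of_proj J i v : supported (chain_of_row (v *m kproj K J i j)) (kbasis J i j).
Proof.
move=> G c; rewrite /chain_of_row; case: ifP => hc; last by rewrite eqxx.
by rewrite kproj_entry enum_rankK; case: ifP => [|_]; rewrite ?eqxx // /kvalid kexp_kidx.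
Qed.

Lemma row_homog_proj J i v : row_homog (v *m kproj K J i j).
Proof. by move=> u; rewrite kproj_entry; case: ifP => [/and3P []|]; rewrite ?eqxx. Qed.

Lemma Tor_vanishP J i : reflect (Tor_vanish K J i j) (~~ Tor_nz K J i j).
Proof.
rewrite negbK; apply: (iffP idP) => [HT f sf Df|T0].
  have vD : row_of_chain f *m kdiff K n j = 0.
    apply: chain_of_row_inj => [||G c].
    - exact: row_homog_mul (row_homog_of_chain sf).
    - by move=> u; rewrite mxE eqxx.
    rewrite chain_of_row_mul chain_of_row0 -(Df G c).
    by apply: eq_koszul_d => H b; apply/row_of_chainK/supported_homog/sf.
  have /submxP [w Ew] : (row_of_chain f <= kproj K J i.+1 j *m kdiff K n j)%MS.
    apply: submx_trans HT; rewrite sub_capmx sub_kermx vD eqxx andbT.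
    by apply/submxP; exists (row_of_chain f); rewrite row_of_chain_proj.
  exists (chain_of_row (w *m kproj K J i.+1 j)); split; first exact: supported_chain_of_proj.
  move=> G c; rewrite -chain_of_row_mul -mulmxA -Ew row_of_chainK //.
  exact: supported_homog sf.
apply/rV_subP => v; rewrite sub_capmx => /andP [/submxP [x ->] /sub_kermxP vD].
have Dx G c : koszul_d (chain_of_row (x *m kproj K J i j)) G c = 0.
  by rewrite -chain_of_row_mul vD chain_of_row0.
have [g [sg Dg]] := T0 _ (supported_chain_of_proj (v := x)) Dx.
apply/submxP; exists (row_of_chain g); rewrite mulmxA row_of_chain_proj //.
apply: chain_of_row_inj => [||G c].
- exact: row_homog_proj.
- exact: row_homog_mul (row_homog_of_chain sg).
rewrite chain_of_row_mul -Dg; apply: eq_koszul_d => H b.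
exact/esym/row_of_chainK/supported_homog/sg.
Qed.

End KoszulMatrix.

Section Regularity.
Variables (K : fieldType) (n : nat).
Implicit Types (J : monideal n) (m : mono n) (ms : seq (mono n)) (r : int).

Lemma Tor_nz_ext J1 J2 i j :
  J1 =1 J2 -> Tor_nz K J1 i j = Tor_nz K J2 i j.
Proof.
move=> E; have EP p : kproj K J1 p j = kproj K J2 p j.
  by apply/matrixP => u w; rewrite !mxE /kvalid E.
by rewrite /Tor_nz !EP.
Qed.

Lemma reg_le_ext J1 J2 r : J1 =1 J2 -> reg_le K J1 r -> reg_le K J2 r.
Proof. by move=> E HJ i j; rewrite -(Tor_nz_ext _ _ E); apply: HJ. Qed.

Lemma is_ideal_gen ms : is_ideal (gen ms).
Proof. by move=> b k /hasP [g gin gb]; apply/hasP; exists g => //; apply: mdvd_mmulr. Qed.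

Lemma is_ideal_addgen J ms : is_ideal J -> is_ideal (addgen J ms).
Proof.
by move=> idJ b k /orP [/idJ Jb | /(is_ideal_gen (ms := ms)) Gb]; apply/orP; [left | right].
Qed.

Lemma Tor_nz_add_colon J m i j : is_ideal J -> Tor_nz K J i j ->
  Tor_nz K (fun b => J b || mdvd m b) i j \/
  exists2 j', j = (j' + mdeg m)%N & Tor_nz K (colon J m) i j'.
Proof.
move=> idJ HT.
case Tadd: (Tor_nz K (fun b => J b || mdvd m b) i j); first by left.
case Tcolon: ((mdeg m <= j)%N && Tor_nz K (colon J m) i (j - mdeg m)).
  by case/andP: Tcolon => hj T; right; exists (j - mdeg m)%N; rewrite ?subnK.
suff : ~~ Tor_nz K J i j by rewrite HT.
apply/Tor_vanishP/(Tor_vanish_add_colon (m := m) idJ); first exact/Tor_vanishP/negbT.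
by move=> j' ej; apply/Tor_vanishP; move: Tcolon; rewrite ej addnK leq_addl => /negbT.
Qed.

Lemma reg_le_add_colon J m r : is_ideal J ->
  reg_le K (fun b => J b || mdvd m b) r -> reg_le K (colon J m) (r - (mdeg m)%:Z) ->
  reg_le K J r.
Proof.
move=> idJ Radd Rcolon i j /(Tor_nz_add_colon m idJ) [/Radd //|[j' -> /Rcolon]].
rewrite PoszD; lia.
Qed.

Lemma reg_le_colon_seq J ms d r : is_ideal J -> all (fun m => mdeg m == d) ms ->
  reg_le K (addgen J ms) r ->
  (forall l, (l < size ms)%N ->
     reg_le K (colon (addgen J (take l ms)) (nth [ffun=> 0%N] ms l)) (r - d%:Z)) ->
  reg_le K J r.
Proof.
move=> idJ; elim/last_ind: ms => [_ RJ _|s m IH].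
  by apply: reg_le_ext RJ => b; rewrite /addgen /gen orbF.
rewrite all_rcons => /andP [/eqP dm ds] Radd Rcolon.
apply: IH => // [|l ls].
- apply: (reg_le_add_colon (m := m) (is_ideal_addgen (ms := s) idJ)).
  + by apply: reg_le_ext Radd => b; rewrite /addgen /gen has_rcons orbA orbAC.
  + move: (Rcolon (size s)); rewrite size_rcons ltnSn -cats1 take_size_cat //.
    by rewrite nth_cat ltnn subnn dm => /(_ isT).
- move: (Rcolon l); rewrite size_rcons ltnS (ltnW ls) -cats1 takel_cat ?(ltnW ls) //.
  by rewrite nth_cat ls => /(_ isT).
Qed.

End Regularity.

Theorem lemma5p1 (K : fieldType) (n n1 n2 : nat)
    (ms : seq (mono n)) (gs : seq (mono n)) :
  (0 < size ms)%N -> uniq ms ->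
  all (fun m => squarefree m && (mdeg m == n1)) ms ->
  all (fun g => squarefree g && (mdeg g == n2)) gs ->
  (forall b, gen gs b -> gen ms b) ->
  (n1 < n2)%N ->
  forall r : int,
    reg_le K (colon (gen gs) (nth [ffun=> 0%N] ms 0)) (r - n1%:Z) ->
    (forall l : nat, (1 <= l <= (size ms).-1)%N ->
       reg_le K (colon (addgen (gen gs) (take l ms)) (nth [ffun=> 0%N] ms l))
              (r - n1%:Z)) ->
    reg_le K (gen ms) r ->
    reg_le K (gen gs) r.
Proof.
move=> _ _ Hms _ JsubI _ r RA RB RC.
apply: (reg_le_colon_seq (ms := ms) (d := n1) (is_ideal_gen (ms := gs))).
- by apply/allP => m /(allP Hms) /andP [].
- by apply: reg_le_ext RC => b; rewrite /addgen; case: (boolP (gen gs b)) => // /JsubI ->.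
move=> [|l] lt; last by apply: RB; lia.
by apply: reg_le_ext RA => b; rewrite /colon /addgen take0 /gen /= orbF.
Qed.
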